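(* Given an $n$-qubit state $\lvert\psi\rangle$, let $\lvert\phi\rangle$ be a stabilizer state that maximizes the stabilizer fidelity, and let $S^* = \mathrm{Weyl}(\lvert\phi\rangle)$. Let $T \subseteq S^*$ be a subspace of $S^*$. Then \[ \sum_{x \in T} p_\psi(x) \geq \frac{\lvert T\rvert}{2^n} F_\mathcal{S}(\lvert\psi\rangle)^2. \]
   Context: For $x=(a,b)\in\mathbb F_2^{2n}$ the Weyl operator is $W_x = i^{a\cdot b}X^{a_1}Z^{b_1}\otimes\cdots\otimes X^{a_n}Z^{b_n}$; $p_\psi(x)=2^{-n}\langle\psi|W_x|\psi\rangle^2$; $\mathrm{Weyl}(\lvert\phi\rangle)=\{x\in\mathbb F_2^{2n}: W_x\lvert\phi\rangle=\pm\lvert\phi\rangle\}$ (a subspace of $\mathbb F_2^{2n}$); $F_\mathcal{S}(\lvert\psi\rangle)=\max_{\lvert\phi\rangle\text{ stabilizer}}\lvert\langle\phi|\psi\rangle\rvert^2$. *)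

From HB Require Import structures.
From mathcomp Require Import all_boot all_order all_algebra.
Set Implicit Arguments. Unset Strict Implicit. Unset Printing Implicit Defensive.
Import Order.TTheory GRing.Theory Num.Theory.
Local Open Scope ring_scope.

Section Qubits.
Variable C : numClosedFieldType.
Variable n : nat.

(* Computational basis of n qubits: bit strings k = (k_1,...,k_n), k_q : 'I_2. *)
Definition basis := {ffun 'I_n -> 'I_2}.

Definition qvec := basis -> C.
Definition qop := basis -> basis -> C.

Definition pauliX : 'M[C]_2 := \matrix_(i, j) (if i == j then 0 else 1).
Definition pauliZ : 'M[C]_2 :=
  \matrix_(i, j) (if i == j then (if (i : nat) == 0%N then 1 else -1) else 0).

(* Points of F_2^{2n}: x = (a, b), a = first n coordinates, b = last n. *)
Definition pt := 'rV['F_2]_(n + n).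
Definition pa (x : pt) (q : 'I_n) : nat := x ord0 (lshift n q).
Definition pb (x : pt) (q : 'I_n) : nat := x ord0 (rshift n q).
(* a . b computed in the integers. *)
Definition adotb (x : pt) : nat := (\sum_(q < n) pa x q * pb x q)%N.

(* Weyl operator W_x = i^{a.b} X^{a_1}Z^{b_1} (x) ... (x) X^{a_n}Z^{b_n},
   written out as the Kronecker product of its single-qubit factors. *)
Definition weyl (x : pt) : qop := fun k j =>
  'i ^+ adotb x *
  \prod_(q < n) ((pauliX ^+ pa x q) * (pauliZ ^+ pb x q)) (k q) (j q).

Definition apply_op (A : qop) (v : qvec) : qvec := fun k => \sum_j A k j * v j.
Definition mul_op (A B : qop) : qop := fun k j => \sum_m A k m * B m j.
Definition id_op : qop := fun k j => if k == j then 1 else 0.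

Definition braket (u v : qvec) : C := \sum_k (u k)^* * v k.
Definition expect (u : qvec) (A : qop) (v : qvec) : C := braket u (apply_op A v).

Definition is_state (v : qvec) : Prop := braket v v = 1.

Definition pdist (psi : qvec) (x : pt) : C :=
  (2 ^+ n)^-1 * (expect psi (weyl x) psi) ^+ 2.

Definition weylset (phi : qvec) : {set pt} :=
  [set x | [forall k, apply_op (weyl x) phi k == phi k]
        || [forall k, apply_op (weyl x) phi k == - phi k]].

(* Elements of the Pauli group: (c, x) stands for i^c W_x. *)
Definition pauli_op (g : 'I_4 * pt) : qop :=
  fun k j => 'i ^+ (g.1 : nat) * weyl g.2 k j.

Definition stabilizer_group (S : {set 'I_4 * pt}) : Prop :=
  [/\ #|S| = (2 ^ n)%N,
      (forall g h, g \in S -> h \in S -> exists2 r, r \in S &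
         forall k j, pauli_op r k j = mul_op (pauli_op g) (pauli_op h) k j),
      (forall g h, g \in S -> h \in S -> forall k j,
         mul_op (pauli_op g) (pauli_op h) k j = mul_op (pauli_op h) (pauli_op g) k j) &
      (forall g, g \in S -> ~ (forall k j, pauli_op g k j = - id_op k j))].

Definition stabilizer_state (phi : qvec) : Prop :=
  is_state phi /\
  exists S, stabilizer_group S /\
    forall g, g \in S -> forall k, apply_op (pauli_op g) phi k = phi k.

Definition fidelity (phi psi : qvec) : C := `|braket phi psi| ^+ 2.

Definition maximizes_stab_fidelity (psi phi : qvec) : Prop :=
  stabilizer_state phi /\
  forall phi', stabilizer_state phi' -> fidelity phi' psi <= fidelity phi psi.

Definition F2_subspace (T : {set pt}) : Prop :=
  0 \in T /\ forall x y, x \in T -> y \in T -> x + y \in T.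

End Qubits.

From mathcomp Require Import all_boot all_order all_algebra.
From mathcomp Require Import ring.
Set Implicit Arguments. Unset Strict Implicit. Unset Printing Implicit Defensive.
Import Order.TTheory GRing.Theory Num.Theory.
Local Open Scope ring_scope.

(* Let s_x = +-1 be the eigenvalue of W_x on phi for x in T. The Weyl operators
   multiply projectively, so testing on phi shows that the x |-> s_x W_x are
   multiplicative on T, hence Q = sum_{x in T} s_x W_x satisfies Q^2 = |T| Q:
   Q / |T| is an orthogonal projector fixing phi, and Cauchy-Schwarz gives
   <psi|Q|psi> >= |T| |<phi|psi>|^2. Since <psi|Q|psi> = sum_x s_x <psi|W_x|psi>,
   Cauchy-Schwarz over T gives <psi|Q|psi>^2 <= |T| sum_x <psi|W_x|psi>^2. *)

Lemma F2_addvv (m : nat) (x : 'rV['F_2]_m) : x + x = 0.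
Proof.
apply/matrixP => i j; rewrite !mxE.
by case: (x i j) => [[|[|//]] ?]; apply/val_inj.
Qed.

Lemma sum_F2_translate (R : nmodType) (m : nat) (T : {set 'rV['F_2]_m})
    (F : 'rV['F_2]_m -> R) (x : 'rV['F_2]_m) :
  (forall y z, y \in T -> z \in T -> y + z \in T) -> x \in T ->
  \sum_(y in T) F (x + y) = \sum_(y in T) F y.
Proof.
move=> TD Tx; have xK : cancel (+%R x) (+%R x) by move=> y; rewrite addrA F2_addvv add0r.
rewrite [RHS](reindex (+%R x)) /=; last by exists (+%R x) => y _.
apply: eq_bigl => y; apply/idP/idP => [|Txy]; first exact: TD.
by rewrite -(xK y); apply: TD.
Qed.

Lemma sqr_sum_le_card_sum_sqr (R : numDomainType) (I : finType) (A : {set I})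
    (f : I -> R) :
  (forall i, i \in A -> f i \is Num.real) ->
  (\sum_(i in A) f i) ^+ 2 <= #|A|%:R * \sum_(i in A) f i ^+ 2.
Proof.
move=> freal; set N : R := #|A|%:R; set S := \sum_(i in A) f i.
have dev : \sum_(i in A) \sum_(j in A) (f i - f j) ^+ 2 =
    2 * (N * \sum_(i in A) f i ^+ 2 - S ^+ 2).
  have inner i : \sum_(j in A) (f i - f j) ^+ 2 =
      N * f i ^+ 2 + \sum_(j in A) f j ^+ 2 - 2 * (f i * S).
    have -> : N * f i ^+ 2 + \sum_(j in A) f j ^+ 2 - 2 * (f i * S) =
        \sum_(j in A) (f i ^+ 2 + f j ^+ 2 - 2 * (f i * f j)).
      by rewrite sumrB big_split /= sumr_const -!mulr_sumr /N mulr_natl.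
    by apply: eq_bigr => j _; ring.
  rewrite (eq_bigr _ (fun i _ => inner i)) sumrB big_split /= -mulr_sumr.
  rewrite sumr_const -mulr_natl -/N -mulr_sumr -mulr_suml -/S; ring.
have : 0 <= \sum_(i in A) \sum_(j in A) (f i - f j) ^+ 2.
  by do 2![apply: sumr_ge0 => ? ?]; rewrite -realEsqr rpredB ?freal.
by rewrite dev pmulr_rge0 ?ltr0n // subr_ge0.
Qed.

Section PauliEntries.
Variable C : numClosedFieldType.

Definition pauli_entry (a b u v : nat) : C :=
  if u == ((v + a) %% 2)%N then (if (b * v == 1)%N then -1 else 1) else 0.

Lemma pauliXZ_entry (a b : nat) (u v : 'I_2) : (a < 2)%N -> (b < 2)%N ->
  (pauliX C ^+ a * pauliZ C ^+ b) u v = pauli_entry a b u v.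
Proof.
rewrite /pauli_entry; case: a => [|[|//]] _; case: b => [|[|//]] _;
rewrite ?expr0 ?expr1 ?mul1r ?mulr1 /pauliX /pauliZ;
case: u => [[|[|//]] ?]; case: v => [[|[|//]] ?]; rewrite ?mxE //=.
all: rewrite !big_ord_recl big_ord0 !mxE /=; ring.
Qed.

Lemma pauli_entry_conj a b u v :
  (a < 2)%N -> (b < 2)%N -> (u < 2)%N -> (v < 2)%N ->
  (pauli_entry a b v u)^* = (-1) ^+ (a * b) * pauli_entry a b u v.
Proof.
rewrite /pauli_entry; case: a => [|[|//]] _; case: b => [|[|//]] _;
case: u => [|[|//]] _; case: v => [|[|//]] _ /=;
rewrite ?rmorphN ?conjC1 ?conjC0 ?expr0 ?expr1; ring.
Qed.

Lemma pauli_entry_mul a b c d u v :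
  (a < 2)%N -> (b < 2)%N -> (c < 2)%N -> (d < 2)%N -> (u < 2)%N -> (v < 2)%N ->
  \sum_(w < 2) pauli_entry a b u w * pauli_entry c d w v =
  (-1) ^+ (b * c) * pauli_entry ((a + c) %% 2) ((b + d) %% 2) u v.
Proof.
rewrite !big_ord_recl big_ord0 /pauli_entry /=.
case: a => [|[|//]] _; case: b => [|[|//]] _; case: c => [|[|//]] _;
case: d => [|[|//]] _; case: u => [|[|//]] _; case: v => [|[|//]] _ /=;
rewrite ?expr0 ?expr1; ring.
Qed.

End PauliEntries.

Section Operators.
Variables (C : numClosedFieldType) (n : nat).
Local Notation qvec := (qvec C n).
Local Notation qop := (qop C n).

Definition selfadjoint (A : qop) := forall k j, A k j = (A j k)^*.

Lemma eq_apply_opl (A B : qop) (v : qvec) k : (forall k j, A k j = B k j) ->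
  apply_op A v k = apply_op B v k.
Proof. by move=> eqAB; apply: eq_bigr => j _; rewrite eqAB. Qed.

Lemma eq_apply_opr (A : qop) (v w : qvec) k : (forall j, v j = w j) ->
  apply_op A v k = apply_op A w k.
Proof. by move=> eqvw; apply: eq_bigr => j _; rewrite eqvw. Qed.

Lemma apply_opZl (A : qop) (v : qvec) c k :
  apply_op (fun k j => c * A k j) v k = c * apply_op A v k.
Proof. by rewrite /apply_op big_distrr; apply: eq_bigr => j _ /=; rewrite mulrA. Qed.

Lemma apply_opZr (A : qop) (v : qvec) c k :
  apply_op A (fun j => c * v j) k = c * apply_op A v k.
Proof. rewrite /apply_op big_distrr; apply: eq_bigr => j _ /=; ring. Qed.

Lemma apply_mul_op (A B : qop) (v : qvec) k :
  apply_op (mul_op A B) v k = apply_op A (apply_op B v) k.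
Proof.
rewrite /apply_op /mul_op; under eq_bigr => j _ do rewrite big_distrl.
rewrite exchange_big /=; apply: eq_bigr => m _.
rewrite big_distrr; apply: eq_bigr => j _ /=; ring.
Qed.

Lemma eq_braketl (u v w : qvec) : (forall k, v k = w k) -> braket v u = braket w u.
Proof. by move=> eqvw; apply: eq_bigr => k _; rewrite eqvw. Qed.

Lemma eq_braketr (u v w : qvec) : (forall k, v k = w k) -> braket u v = braket u w.
Proof. by move=> eqvw; apply: eq_bigr => k _; rewrite eqvw. Qed.

Lemma braket_conj (u v : qvec) : (braket u v)^* = braket v u.
Proof.
rewrite /braket rmorph_sum; apply: eq_bigr => k _.
by rewrite rmorphM /= conjCK mulrC.
Qed.

Lemma braketZl (u v : qvec) c : braket (fun k => c * u k) v = c^* * braket u v.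
Proof. rewrite /braket big_distrr; apply: eq_bigr => k _ /=; rewrite rmorphM; ring. Qed.

Lemma braketZr (u v : qvec) c : braket u (fun k => c * v k) = c * braket u v.
Proof. rewrite /braket big_distrr; apply: eq_bigr => k _ /=; ring. Qed.

Lemma braket_selfadjoint (A : qop) (u v : qvec) : selfadjoint A ->
  braket (apply_op A u) v = braket u (apply_op A v).
Proof.
move=> sA; rewrite /braket /apply_op.
under eq_bigr => k _ do rewrite rmorph_sum big_distrl.
rewrite exchange_big /=; apply: eq_bigr => j _.
rewrite big_distrr; apply: eq_bigr => k _ /=; rewrite rmorphM /= -sA; ring.
Qed.

Lemma expect_real (A : qop) (u : qvec) : selfadjoint A -> expect u A u \is Num.real.
Proof. by move=> sA; rewrite CrealE braket_conj braket_selfadjoint. Qed.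

Lemma braket_ge0 (v : qvec) : 0 <= braket v v.
Proof. by apply: sumr_ge0 => k _; rewrite mulrC -normCK exprn_ge0. Qed.

Lemma state_neq0 (phi : qvec) : is_state phi -> exists k, phi k != 0.
Proof.
move=> phi1; apply/existsP; apply: contraTT isT => /existsPn phi0.
move: phi1; rewrite /is_state /braket big1 => [/esym/eqP|k _]; first by rewrite oner_eq0.
by move/negbNE/eqP: (phi0 k) => ->; rewrite mulr0.
Qed.

Lemma sqr_norm_braket_le (phi v : qvec) : is_state phi ->
  `|braket phi v| ^+ 2 <= braket v v.
Proof.
move=> phi1.
have expand (c : C) : braket (fun k => v k - c * phi k) (fun k => v k - c * phi k) =
    braket v v - c * braket v phi - c^* * braket phi v + c^* * c * braket phi phi.
  rewrite /braket !mulr_sumr -!sumrN -!big_split /=.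
  by apply: eq_bigr => k _; rewrite rmorphB rmorphM /=; ring.
have := braket_ge0 (fun k => v k - braket phi v * phi k).
by rewrite expand phi1 -[braket v phi]braket_conj normCK mulr1 addrNK subr_ge0.
Qed.

End Operators.

Section Weyl.
Variables (C : numClosedFieldType) (n : nat).

Lemma weylE (x : pt n) k j : weyl C x k j =
  'i ^+ adotb x * \prod_q pauli_entry C (pa x q) (pb x q) (k q) (j q).
Proof. by congr (_ * _); apply: eq_bigr => q _; rewrite pauliXZ_entry ?ltn_ord. Qed.

Lemma paD (x y : pt n) q : pa (x + y) q = ((pa x q + pa y q) %% 2)%N.
Proof. by rewrite /pa mxE. Qed.

Lemma pbD (x y : pt n) q : pb (x + y) q = ((pb x q + pb y q) %% 2)%N.
Proof. by rewrite /pb mxE. Qed.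

Lemma weyl_selfadjoint (x : pt n) : selfadjoint (weyl C x).
Proof.
move=> k j; rewrite !weylE rmorphM /= rmorphXn /= conjCi rmorph_prod /=.
under [in RHS]eq_bigr => q _ do rewrite pauli_entry_conj ?ltn_ord //.
by rewrite big_split /= prodrXr mulrA -exprMn mulrN1 opprK.
Qed.

Lemma weyl_mul_proportional (x y : pt n) : exists c, forall k j,
  mul_op (weyl C x) (weyl C y) k j = c * weyl C (x + y) k j.
Proof.
exists ('i ^+ adotb x * 'i ^+ adotb y * (-1) ^+ (\sum_q pb x q * pa y q)
        / 'i ^+ adotb (x + y)) => k j.
pose F q (w : 'I_2) := pauli_entry C (pa x q) (pb x q) (k q) w *
                       pauli_entry C (pa y q) (pb y q) w (j q).
rewrite /mul_op (eq_bigr (fun m : basis n =>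
    'i ^+ adotb x * 'i ^+ adotb y * \prod_q F q (m q))); last first.
  by move=> m _; rewrite !weylE mulrACA -big_split.
rewrite -big_distrr /= -(bigA_distr_bigA F) /=.
under eq_bigr => q _ do rewrite pauli_entry_mul ?ltn_ord // -paD -pbD.
rewrite big_split /= prodrXr weylE mulrA -[in RHS]mulrA [in RHS](mulrA _ ('i ^+ _)).
by rewrite divfK ?expf_neq0 ?neq0Ci // mulrA.
Qed.

End Weyl.

Section SignedSum.
Variables (C : numClosedFieldType) (n : nat).
Variables (T : {set pt n}) (W : pt n -> qop C n) (s : pt n -> C) (phi : qvec C n).
Hypothesis T0 : 0 \in T.
Hypothesis TD : forall x y, x \in T -> y \in T -> x + y \in T.
Hypothesis W_selfadjoint : forall x, selfadjoint (W x).
Hypothesis W_mul : forall x y, exists c, forall k j,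
  mul_op (W x) (W y) k j = c * W (x + y) k j.
Hypothesis s_sign : forall x, x \in T -> s x = 1 \/ s x = -1.
Hypothesis phi_state : is_state phi.
Hypothesis W_phi : forall x, x \in T -> forall k, apply_op (W x) phi k = s x * phi k.

Local Notation N := (#|T|%:R : C).

Lemma card_gt0 : 0 < N.
Proof. by rewrite ltr0n; apply/card_gt0P; exists 0. Qed.

Lemma sign_sqr x : x \in T -> s x * s x = 1.
Proof. by move/s_sign => [] ->; rewrite ?mulr1 ?mulrNN ?mulr1. Qed.

Lemma sign_real x : x \in T -> s x \is Num.real.
Proof. by move/s_sign => [] ->; rewrite ?rpredN rpred1. Qed.

Definition signed_sum : qop C n := fun k j => \sum_(x in T) s x * W x k j.

Lemma apply_signed_sum v k :
  apply_op signed_sum v k = \sum_(x in T) s x * apply_op (W x) v k.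
Proof.
rewrite /apply_op /signed_sum; under eq_bigr => j _ do rewrite big_distrl.
rewrite exchange_big /=; apply: eq_bigr => x _.
rewrite big_distrr; apply: eq_bigr => j _ /=; ring.
Qed.

Lemma signed_sum_selfadjoint : selfadjoint signed_sum.
Proof.
move=> k j; rewrite /signed_sum rmorph_sum; apply: eq_bigr => x Tx.
by rewrite rmorphM /= -W_selfadjoint (CrealP (sign_real Tx)).
Qed.

Lemma signed_sum_phi k : apply_op signed_sum phi k = N * phi k.
Proof.
rewrite apply_signed_sum (eq_bigr (fun _ => phi k)) ?sumr_const ?mulr_natl //.
by move=> x Tx; rewrite W_phi // mulrA sign_sqr ?mul1r.
Qed.

(* The proportionality constant c of W_x W_y = c W_{x+y} is read off on phi. *)
Lemma signed_mul x y : x \in T -> y \in T -> forall k j,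
  s x * s y * mul_op (W x) (W y) k j = s (x + y) * W (x + y) k j.
Proof.
move=> Tx Ty k j; have [c Wxy] := W_mul x y; have [k0 phik0] := state_neq0 phi_state.
have : c * s (x + y) * phi k0 = s y * s x * phi k0.
  transitivity (apply_op (mul_op (W x) (W y)) phi k0).
    by rewrite (eq_apply_opl phi k0 Wxy) apply_opZl W_phi ?TD // mulrA.
  by rewrite apply_mul_op (eq_apply_opr (W x) k0 (W_phi Ty)) apply_opZr W_phi // mulrA.
move/(mulIf phik0) => cs; rewrite Wxy.
have -> : c = s y * s x * s (x + y) by rewrite -cs -mulrA sign_sqr ?TD ?mulr1.
have -> : forall w, s x * s y * (s y * s x * s (x + y) * w) =
    (s x * s x) * (s y * s y) * s (x + y) * w by move=> w; ring.
by rewrite !sign_sqr // !mul1r.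
Qed.

Lemma signed_sum_sqr k j : mul_op signed_sum signed_sum k j = N * signed_sum k j.
Proof.
rewrite /mul_op (eq_bigr (fun m => \sum_(x in T) \sum_(y in T)
    s x * s y * (W x k m * W y m j))); last first.
  move=> m _; rewrite /signed_sum big_distrl; apply: eq_bigr => x _ /=.
  rewrite big_distrr; apply: eq_bigr => y _ /=; ring.
rewrite exchange_big /= (eq_bigr (fun x => signed_sum k j)) ?sumr_const ?mulr_natl //.
move=> x Tx; rewrite exchange_big /=.
rewrite (eq_bigr (fun y => s (x + y) * W (x + y) k j)).
  exact: (sum_F2_translate (fun z => s z * W z k j)).
by move=> y Ty; rewrite -signed_mul // /mul_op big_distrr.
Qed.

(* signed_sum / N is an orthogonal projector fixing phi. *)
Lemma fidelity_le_expect_signed_sum psi :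
  N * `|braket phi psi| ^+ 2 <= expect psi signed_sum psi.
Proof.
have sQ := signed_sum_selfadjoint; set v := apply_op signed_sum psi.
have Nv : braket v v = N * expect psi signed_sum psi.
  rewrite {1}/v braket_selfadjoint // -(braketZr psi v).
  apply: eq_braketr => k; rewrite -apply_mul_op -apply_opZl.
  by apply: eq_apply_opl => ? ?; rewrite signed_sum_sqr.
have phiv : braket phi v = N * braket phi psi.
  rewrite -braket_selfadjoint //.
  by rewrite (eq_braketl _ signed_sum_phi) braketZl conjC_nat.
have := sqr_norm_braket_le v phi_state.
by rewrite phiv Nv normrM normr_nat exprMn expr2 -mulrA ler_pM2l ?card_gt0.
Qed.

Lemma expect_signed_sum psi :
  expect psi signed_sum psi = \sum_(x in T) s x * expect psi (W x) psi.
Proof.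
rewrite /expect (eq_braketr _ (apply_signed_sum psi)) /braket.
under eq_bigr => k _ do rewrite big_distrr.
rewrite exchange_big /=; apply: eq_bigr => x _; rewrite big_distrr.
by apply: eq_bigr => k _ /=; ring.
Qed.

Lemma card_sqr_fidelity_le_sum_sqr_expect psi :
  N * (`|braket phi psi| ^+ 2) ^+ 2 <= \sum_(x in T) expect psi (W x) psi ^+ 2.
Proof.
set a := `|braket phi psi| ^+ 2.
have Na_ge0 : 0 <= N * a by rewrite mulr_ge0 ?exprn_ge0 // ltW // card_gt0.
have Na_le := fidelity_le_expect_signed_sum psi.
have CS : expect psi signed_sum psi ^+ 2 <=
    N * \sum_(x in T) expect psi (W x) psi ^+ 2.
  rewrite expect_signed_sum
    [X in _ <= _ * X](eq_bigr (fun x => (s x * expect psi (W x) psi) ^+ 2)).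
    by apply: sqr_sum_le_card_sum_sqr => x Tx; rewrite rpredM ?sign_real ?expect_real.
  by move=> x Tx; rewrite exprMn [s x ^+ 2]expr2 sign_sqr ?mul1r.
rewrite expr2 in CS; have := le_trans (ler_pM Na_ge0 Na_ge0 Na_le Na_le) CS.
by rewrite -mulrA ler_pM2l ?card_gt0 // mulrCA -expr2.
Qed.

End SignedSum.

Definition weyl_sign (C : numClosedFieldType) (n : nat) (phi : qvec C n) (x : pt n)
  : C :=
  if [forall k, apply_op (weyl C x) phi k == phi k] then 1 else -1.

Lemma weylset_eigen (C : numClosedFieldType) (n : nat) (phi : qvec C n) x :
  x \in weylset phi -> forall k, apply_op (weyl C x) phi k = weyl_sign phi x * phi k.
Proof.
rewrite inE /weyl_sign; case: ifP => [/forallP Wphi _|_ /= /forallP Wphi] k.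
  by rewrite mul1r; apply/eqP.
by rewrite mulN1r; apply/eqP.
Qed.

Theorem corollary5p3 (C : numClosedFieldType) (n : nat) (psi phi : qvec C n)
    (T : {set pt n}) :
  is_state psi ->
  maximizes_stab_fidelity psi phi ->
  F2_subspace T ->
  T \subset weylset phi ->
  \sum_(x in T) pdist psi x >=
    #|T|%:R / (2 ^+ n) * (fidelity phi psi) ^+ 2.
Proof.
move=> _ [[phi_state _] _] [T0 TD] /subsetP T_weyl.
have sign x : x \in T -> weyl_sign phi x = 1 \/ weyl_sign phi x = -1.
  by rewrite /weyl_sign; case: ifP; [left|right].
have bound := card_sqr_fidelity_le_sum_sqr_expect T0 TD (@weyl_selfadjoint C n)
  (@weyl_mul_proportional C n) sign phi_state
  (fun x Tx => weylset_eigen (T_weyl x Tx)) psi.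
rewrite /pdist -mulr_sumr /fidelity mulrAC mulrC.
by rewrite ler_wpM2l ?invr_ge0 ?exprn_ge0 ?ler0n.
Qed.
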